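(* Let $f:\mathbb{R}^n\to(-\infty,+\infty]$ be proper, lower semicontinuous and prox-bounded with threshold $\lambda_f>0$, let $0<\lambda<\lambda_f$ and let $x\in\operatorname{dom}f$. Then the following are equivalent: (a) $P_\lambda f(x)$ is a singleton; (b) $e_\lambda f$ is strictly differentiable at $x$; (c) $(\lambda f+j)^*$ is (strictly) differentiable at $x$; (d) there exists $u\in P_\lambda f(x)$ such that $\lambda f+j$ is essentially strongly convex at $u$ for $x$. When one of these holds, $P_\lambda f(x)=\{\nabla(\lambda f+j)^*(x)\}$.
   Context: $j:=\frac12\|\cdot\|^2$; $g^*$ denotes the Legendre–Fenchel conjugate. $e_\lambda f(x):=\inf_y\{f(y)+\frac1{2\lambda}\|y-x\|^2\}$, $P_\lambda f(x):=\operatorname{argmin}_y\{f(y)+\frac1{2\lambda}\|y-x\|^2\}$; prox-bounded with threshold $\lambda_f=\sup\{\lambda>0:e_\lambda f(x)>-\infty\text{ for some }x\}$. Let $\Gamma_0$ be the class of proper lsc convex $\psi:[0,\infty)\to[0,\infty]$ with $\psi(t)=0$ iff $t=0$. A proper lsc $g$ is essentially strongly convex at $u\in\operatorname{dom}g$ for $x\in\mathbb{R}^n$ if there is $\psi\in\Gamma_0$ with $g(y)\ge g(u)+\langle y-u,x\rangle+\psi(\|y-u\|)$ for all $y\in\mathbb{R}^n$. *)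

(* R : realType, R^n = 'rV[R]_n with the EUCLIDEAN
   inner product / norm defined below (not MathComp's sup-norm). *)
From HB Require Import structures.
From mathcomp Require Import all_boot all_order all_algebra.
From mathcomp Require Import all_classical all_reals.
From mathcomp Require Import ereal.
Set Implicit Arguments. Unset Strict Implicit. Unset Printing Implicit Defensive.
Import Order.TTheory GRing.Theory Num.Theory.
Local Open Scope classical_set_scope.
Local Open Scope ring_scope.

Section Defs.
Context {R : realType} {n : nat}.
Notation V := 'rV[R]_n.

Definition dotp (u v : V) : R := \sum_(i < n) u ord0 i * v ord0 i.
Definition enorm (u : V) : R := Num.sqrt (dotp u u).
Definition jsq (u : V) : R := 2^-1 * enorm u ^+ 2.

Definition never_minfty (f : V -> \bar R) := forall y, f y != -oo%E.
Definition proper_fun (f : V -> \bar R) :=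
  never_minfty f /\ exists y, (f y < +oo)%E.
Definition lsc (f : V -> \bar R) :=
  forall x (a : R), (a%:E < f x)%E ->
    exists2 d : R, 0 < d & forall y, enorm (y - x) < d -> (a%:E < f y)%E.
Definition in_dom (f : V -> \bar R) (x : V) := (f x < +oo)%E.

Definition moreau_env (f : V -> \bar R) (lam : R) (x : V) : \bar R :=
  ereal_inf [set (f y + ((2 * lam)^-1 * enorm (y - x) ^+ 2)%:E)%E | y in [set: V]].
Definition prox_map (f : V -> \bar R) (lam : R) (x : V) : set V :=
  [set y | forall z, (f y + ((2 * lam)^-1 * enorm (y - x) ^+ 2)%:E
                      <= f z + ((2 * lam)^-1 * enorm (z - x) ^+ 2)%:E)%E].

Definition prox_bounded (f : V -> \bar R) :=
  exists2 lam : R, 0 < lam & exists x, (-oo < moreau_env f lam x)%E.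
Definition prox_threshold (f : V -> \bar R) : \bar R :=
  ereal_sup [set lam%:E | lam in [set lam : R | 0 < lam /\
                                     exists x, (-oo < moreau_env f lam x)%E]].

Definition conj (g : V -> \bar R) (x : V) : \bar R :=
  ereal_sup [set ((dotp y x)%:E - g y)%E | y in [set: V]].

Definition scaled_plus_j (f : V -> \bar R) (lam : R) (y : V) : \bar R :=
  (lam%:E * f y + (jsq y)%:E)%E.

Definition is_gradient (h : V -> \bar R) (x v : V) :=
  (exists2 d0 : R, 0 < d0 & forall y, enorm (y - x) < d0 -> h y \is a fin_num) /\
  forall eps : R, 0 < eps -> exists2 d : R, 0 < d & forall y, enorm (y - x) < d ->
    `| fine (h y) - fine (h x) - dotp v (y - x) | <= eps * enorm (y - x).
Definition differentiable_at (h : V -> \bar R) (x : V) := exists v, is_gradient h x v.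

Definition strictly_differentiable_at (h : V -> \bar R) (x : V) :=
  exists v : V,
  (exists2 d0 : R, 0 < d0 & forall y, enorm (y - x) < d0 -> h y \is a fin_num) /\
  forall eps : R, 0 < eps -> exists2 d : R, 0 < d & forall y z,
    enorm (y - x) < d -> enorm (z - x) < d ->
    `| fine (h y) - fine (h z) - dotp v (y - z) | <= eps * enorm (y - z).

(* the class Gamma_0 : proper lsc convex psi : [0,oo) -> [0,oo],
   psi t = 0 iff t = 0 (values of psi at t < 0 are irrelevant) *)
Definition Gamma0 (psi : R -> \bar R) :=
  [/\ (forall t, 0 <= t -> (0 <= psi t)%E),
      (forall t, 0 <= t -> (psi t = 0%E <-> t = 0)),
      (forall s t a : R, 0 <= s -> 0 <= t -> 0 <= a -> a <= 1 ->
         (psi (a * s + (1 - a) * t)%R <= a%:E * psi s + (1 - a)%R%:E * psi t)%E) &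
      (forall t (b : R), 0 <= t -> (b%:E < psi t)%E ->
         exists2 d : R, 0 < d & forall s, 0 <= s -> `|s - t|%R < d -> (b%:E < psi s)%E)].

Definition ess_strongly_convex_at (g : V -> \bar R) (u x : V) :=
  in_dom g u /\
  exists psi, Gamma0 psi /\
    forall y, (g u + (dotp (y - u) x)%:E + psi (enorm (y - u)) <= g y)%E.

End Defs.

From HB Require Import structures.
From mathcomp Require Import all_boot all_order all_algebra.
From mathcomp Require Import all_classical all_reals.
From mathcomp Require Import ereal topology normedtype.
From mathcomp Require Import ring lra.
Import Order.TTheory GRing.Theory Num.Theory.
Import numFieldNormedType.Exports.
Local Open Scope classical_set_scope.
Local Open Scope ring_scope.

(* Since lam < lam' < prox_threshold f, the proximal objective
   y |-> f y + |y - z|^2 / (2 lam) is coercive, so it attains its infimum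
   e_lam f (z) on a compact box and P_lam f (z) is never empty.  Expanding the
   square gives (lam f + j)^* = j - lam e_lam f, and every p in P_lam f (x) is a
   subgradient of (lam f + j)^* at x; hence a gradient v there forces
   P_lam f (x) = {v}.  Conversely, if P_lam f (x) = {u}, lower semicontinuity
   and compactness make the objective grow at least linearly away from u.  This
   yields continuity of P_lam f at x, hence strict differentiability of e_lam f
   (the envelopes at y and z are compared through each other's proximal
   points), and it also yields the modulus of essential strong convexity, as a
   supremum of affine minorants t |-> a (t - s).  Finally, essential strong
   convexity at a proximal point u leaves no room for a second one. *)

Section Euclidean.
Context {R : realType} {n : nat}.
Local Notation V := 'rV[R]_n.

Lemma dotpC (u v : V) : dotp u v = dotp v u.
Proof. by apply: eq_bigr => i _; rewrite mulrC. Qed.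

Lemma dotpDl (u v w : V) : dotp (u + v) w = dotp u w + dotp v w.
Proof. by rewrite /dotp -big_split; apply: eq_bigr => i _; rewrite mxE mulrDl. Qed.

Lemma dotpZl (k : R) (u v : V) : dotp (k *: u) v = k * dotp u v.
Proof. by rewrite /dotp mulr_sumr; apply: eq_bigr => i _; rewrite mxE mulrA. Qed.

Lemma dotpNl (u v : V) : dotp (- u) v = - dotp u v.
Proof. by rewrite /dotp -sumrN; apply: eq_bigr => i _; rewrite mxE mulNr. Qed.

Lemma dotpBl (u v w : V) : dotp (u - v) w = dotp u w - dotp v w.
Proof. by rewrite dotpDl dotpNl. Qed.

Lemma dotpDr (u v w : V) : dotp w (u + v) = dotp w u + dotp w v.
Proof. by rewrite dotpC dotpDl !(dotpC w). Qed.

Lemma dotpZr (k : R) (u v : V) : dotp v (k *: u) = k * dotp v u.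
Proof. by rewrite dotpC dotpZl dotpC. Qed.

Lemma dotpNr (u v : V) : dotp v (- u) = - dotp v u.
Proof. by rewrite dotpC dotpNl dotpC. Qed.

Lemma dotpBr (u v w : V) : dotp w (u - v) = dotp w u - dotp w v.
Proof. by rewrite dotpDr dotpNr. Qed.

Lemma dotp0l (u : V) : dotp 0 u = 0.
Proof. by rewrite /dotp big1 // => i _; rewrite mxE mul0r. Qed.

Lemma dotp0r (u : V) : dotp u 0 = 0.
Proof. by rewrite dotpC dotp0l. Qed.

Lemma dotpp_ge0 (u : V) : 0 <= dotp u u.
Proof. by apply: sumr_ge0 => i _; rewrite -expr2 sqr_ge0. Qed.

Lemma dotpp_eq0 (u : V) : dotp u u = 0 -> u = 0.
Proof.
move=> /eqP; rewrite psumr_eq0; last by move=> i _; rewrite -expr2 sqr_ge0.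
move=> /allP u0; apply/rowP => i; rewrite mxE.
by have := u0 i (mem_index_enum _); rewrite mulf_eq0 orbb => /eqP.
Qed.

Lemma dotp_sqrD (u v : V) : dotp (u + v) (u + v) = dotp u u + 2 * dotp u v + dotp v v.
Proof. by rewrite dotpDl !dotpDr (dotpC v u); ring. Qed.

Lemma enorm_sqr (u : V) : enorm u ^+ 2 = dotp u u.
Proof. by rewrite /enorm sqr_sqrtr // dotpp_ge0. Qed.

Lemma enorm_ge0 (u : V) : 0 <= enorm u.
Proof. exact: sqrtr_ge0. Qed.

Lemma enorm0 : enorm (0 : V) = 0.
Proof. by rewrite /enorm dotp0l sqrtr0. Qed.

Lemma enorm_eq0 (u : V) : enorm u = 0 -> u = 0.
Proof.
move=> /eqP; rewrite /enorm sqrtr_eq0 => u_le0; apply: dotpp_eq0.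
by apply/eqP; rewrite eq_le u_le0 dotpp_ge0.
Qed.

Lemma enorm_distC (u v : V) : enorm (u - v) = enorm (v - u).
Proof. by rewrite /enorm -opprB dotpNl dotpNr opprK. Qed.

Lemma enormZ (k : R) (u : V) : enorm (k *: u) = `|k| * enorm u.
Proof.
by rewrite /enorm dotpZl dotpZr mulrA -expr2 sqrtrM ?sqr_ge0 // sqrtr_sqr.
Qed.

Lemma dotp_sqr_le (u v : V) : dotp u v ^+ 2 <= dotp u u * dotp v v.
Proof.
have [v0|v_neq0] := eqVneq (dotp v v) 0.
  by rewrite (dotpp_eq0 _ v0) dotp0r dotp0l mulr0 expr2 mulr0.
have v_gt0 : 0 < dotp v v by rewrite lt_def v_neq0 dotpp_ge0.
have := dotpp_ge0 (dotp v v *: u - dotp u v *: v).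
rewrite !dotpBl !dotpBr !dotpZl !dotpZr (dotpC v u) => ge0.
have : 0 <= dotp v v * (dotp v v * dotp u u - dotp u v ^+ 2).
  by apply: le_trans ge0 _; rewrite le_eqVlt; apply/orP; left; apply/eqP; ring.
by rewrite pmulr_rge0 // subr_ge0 mulrC.
Qed.

Lemma normr_dotp_le (u v : V) : `|dotp u v| <= enorm u * enorm v.
Proof.
rewrite /enorm -sqrtrM ?dotpp_ge0 // -sqrtr_sqr.
exact/ler_wsqrtr/dotp_sqr_le.
Qed.

Lemma dotp_le (u v : V) : dotp u v <= enorm u * enorm v.
Proof. exact: le_trans (ler_norm _) (normr_dotp_le u v). Qed.

Lemma enormD_le (u v : V) : enorm (u + v) <= enorm u + enorm v.
Proof.
rewrite {1}/enorm -[enorm u + enorm v]ger0_norm ?addr_ge0 ?enorm_ge0 //.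
rewrite -sqrtr_sqr; apply: ler_wsqrtr.
rewrite dotp_sqrD sqrrD !enorm_sqr; have := dotp_le u v; lra.
Qed.

Lemma coord_sqr_le (u : V) i : u ord0 i ^+ 2 <= dotp u u.
Proof.
rewrite /dotp (bigD1 i) //= -expr2 lerDl.
by apply: sumr_ge0 => j _; rewrite -expr2 sqr_ge0.
Qed.

Lemma coord_le_enorm (u : V) i : `|u ord0 i| <= enorm u.
Proof. by rewrite -sqrtr_sqr; exact/ler_wsqrtr/coord_sqr_le. Qed.

Lemma dotpp_le_box (u : V) (e : R) : (forall i, `|u ord0 i| <= e) ->
  dotp u u <= n%:R * e ^+ 2.
Proof.
move=> u_le; apply: le_trans (_ : \sum_(i < n) e ^+ 2 <= _); last first.
  by rewrite sumr_const card_ord mulr_natl.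
apply: ler_sum => i _; rewrite -expr2 -real_normK ?num_real //.
by rewrite lerXn2r ?nnegrE ?normr_ge0 // (le_trans _ (u_le i)).
Qed.

Lemma dotp_young (u v : V) (a b : R) : 0 < a ->
  2 * b * dotp u v <= a * dotp u u + b ^+ 2 / a * dotp v v.
Proof.
move=> a0; have := dotpp_ge0 (a *: u - b *: v).
rewrite !dotpBl !dotpBr !dotpZl !dotpZr (dotpC v u) => ge0.
rewrite -(ler_pM2l a0).
have -> : a * (a * dotp u u + b ^+ 2 / a * dotp v v) =
    a * (a * dotp u u) + b * (b * dotp v v).
  by field; rewrite gt_eqF.
lra.
Qed.

End Euclidean.

Ltac dotp_ring := rewrite /dotp;
  do ?[rewrite -sumrB | rewrite mulr_sumr | rewrite -big_split /=];
  apply: eq_bigr => i _; rewrite !mxE; first [ring | (field; by rewrite ?pnatr_eq0)].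

Section Identities.
Context {R : realType} {n : nat}.
Local Notation V := 'rV[R]_n.

Lemma four_point_identity (u p x z : V) :
  enorm (u - z) ^+ 2 - enorm (p - z) ^+ 2 + enorm (p - x) ^+ 2 - enorm (u - x) ^+ 2
  = 2 * dotp (p - u) (z - x).
Proof. by rewrite !enorm_sqr; dotp_ring. Qed.

Lemma jsqBB (x y z : V) :
  jsq y - jsq z - dotp x (y - z) = dotp (y - z) (2^-1 *: ((y - x) + (z - x))).
Proof. by rewrite /jsq !enorm_sqr; dotp_ring. Qed.

Lemma jsqB_dotp (x u y : V) :
  jsq y - jsq u - dotp (y - u) x = 2^-1 * (enorm (y - x) ^+ 2 - enorm (u - x) ^+ 2).
Proof. by rewrite /jsq !enorm_sqr; dotp_ring. Qed.

Lemma dotpB_jsq (y z : V) :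
  dotp y z - jsq y = jsq z - 2^-1 * enorm (y - z) ^+ 2.
Proof. by rewrite /jsq !enorm_sqr; dotp_ring. Qed.

End Identities.

Section Semicontinuity.
Context {R : realType} {n : nat}.
Local Notation V := 'rV[R]_n.

Lemma nbhs_enorm_ball (p : V) (d : R) : 0 < d -> nbhs p [set y | enorm (y - p) < d].
Proof.
move=> d0; set e := d / n.+1%:R.
have e0 : 0 < e by rewrite divr_gt0.
apply/nbhs_ballP; exists e => //= y [_ yp].
have box : dotp (y - p) (y - p) <= n%:R * e ^+ 2.
  apply: dotpp_le_box => i; rewrite !mxE distrC; apply: ltW.
  by have := yp ord0 i; rewrite -ball_normE.
have box_lt : n%:R * e ^+ 2 < d ^+ 2.
  have -> : d = e * n.+1%:R by rewrite /e divfK.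
  by rewrite -natr1; have : 0 <= n%:R :> R by []; nra.
rewrite /= /enorm -(ger0_norm (ltW d0)) -sqrtr_sqr ltr_sqrt ?exprn_gt0 //.
exact: le_lt_trans box box_lt.
Qed.

Lemma box_compact (u : V) (r : R) :
  compact [set y : V | forall i, `|y ord0 i - u ord0 i| <= r].
Proof.
have := @rV_compact _ n (fun i => `[u ord0 i - r, u ord0 i + r]%classic)
  (fun i => @segment_compact _ _ _).
congr compact; apply/seteqP; split => y /= y_in i; have := y_in i;
  by rewrite /= in_itv /= -ler_distlC distrC.
Qed.

Lemma lsc_gt_compact {K : set V} {h : V -> \bar R} {c : R} :
  compact K -> lsc h -> (forall y, K y -> (c%:E < h y)%E) ->
  exists2 c', c < c' & forall y, K y -> (c'%:E <= h y)%E.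
Proof.
move=> cK h_lsc h_gt.
apply: contrapT => no_c'.
have near_c e : 0 < e -> exists y, K y /\ (h y < (c + e)%:E)%E.
  move=> e0; apply: contrapT => none; apply: no_c'.
  exists (c + e); first by rewrite ltrDl.
  by move=> y Ky; rewrite leNgt; apply/negP => lt; apply: none; exists y.
pose F := filter_from [set e : R | 0 < e]
  (fun e => [set y | K y /\ (h y < (c + e)%:E)%E]).
have F_filter : ProperFilter F.
  apply: filter_from_proper; last by move=> e /near_c [y yK]; exists y.
  apply: filter_from_filter; first by exists 1 => /=.
  move=> i j i0 j0; exists (Num.min i j); first by rewrite /= lt_min i0 j0.
  move=> y [Ky hy]; split; split => //; apply: lt_le_trans hy _;
    by rewrite lee_fin lerD2l ge_min lexx ?orbT.
have FK : F K by exists 1 => //= y [].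
have [p [Kp p_cl]] := cK F F_filter FK.
have [a [ca a_lt]] : exists a : R, c < a /\ (a%:E < h p)%E.
  move: (h_gt p Kp); case: (h p) => [r| |] //=.
    by rewrite lte_fin => cr; exists ((c + r) / 2); rewrite lte_fin; split; lra.
  by move=> _; exists (c + 1); split; [lra | exact: ltry].
have [d d0 near_p] := h_lsc p a a_lt.
have Fa : F [set y | K y /\ (h y < (c + (a - c))%:E)%E].
  by exists (a - c) => //=; rewrite subr_gt0.
have [y [[_ hy] yd]] := p_cl _ _ Fa (nbhs_enorm_ball p d d0).
by move: hy; rewrite addrC subrK ltNge (ltW (near_p y yd)).
Qed.

Lemma lsc_compact_argmin {K : set V} {h : V -> \bar R} {y0 : V} {b : R} :
  compact K -> lsc h -> K y0 -> (h y0 < +oo)%E ->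
  (forall y, K y -> (b%:E <= h y)%E) ->
  exists2 p, K p & forall y, K y -> (h p <= h y)%E.
Proof.
move=> cK h_lsc Ky0 hy0 h_ge.
set m := ereal_inf [set h y | y in K].
have m_le : (m <= h y0)%E by apply: ereal_inf_lbound; exists y0.
have m_ge : (b%:E <= m)%E by apply/ereal_infP => _ [y Ky <-]; exact: h_ge.
have m_fin : m \is a fin_num.
  rewrite fin_numE; apply/andP; split; apply/eqP => mE.
    by move: m_ge; rewrite mE.
  by move: (le_lt_trans m_le hy0); rewrite mE ltxx.
have [p Kp pm] : exists2 p, K p & h p = m.
  apply: contrapT => none.
  have h_gt y : K y -> ((fine m)%:E < h y)%E.
    move=> Ky; rewrite fineK // lt_def; apply/andP; split.
      by apply/eqP => hym; apply: none; exists y.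
    by apply: ereal_inf_lbound; exists y.
  have [c' mc' c'_le] := lsc_gt_compact cK h_lsc h_gt.
  have : (c'%:E <= m)%E by apply/ereal_infP => _ [y Ky <-]; exact: c'_le.
  by rewrite -(fineK m_fin) lee_fin leNgt mc'.
by exists p => // y Ky; rewrite pm; apply: ereal_inf_lbound; exists y.
Qed.

Lemma lsc_strict_min_annulus {h : V -> \bar R} {u : V} {m s : R} :
  lsc h -> 0 < s -> (forall y, y != u -> (m%:E < h y)%E) ->
  forall r, exists2 c, m < c &
    forall y, s <= enorm (y - u) -> enorm (y - u) <= r -> (c%:E <= h y)%E.
Proof.
move=> h_lsc s0 h_gt r.
pose h' y := if enorm (y - u) < s then +oo%E else h y.
have h'_lsc : lsc h'.
  move=> z a a_lt; have [zs|zs] := boolP (enorm (z - u) < s).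
    exists (s - enorm (z - u)); first by rewrite subr_gt0.
    move=> y yz; rewrite /h'; case: ifPn => [_|/negP[]]; first exact: ltry.
    by have := enormD_le (y - z) (z - u); rewrite addrA subrK; lra.
  rewrite /h' (negbTE zs) in a_lt.
  have [d d0 near_z] := h_lsc z a a_lt.
  by exists d => // y yz; rewrite /h'; case: ifP => _; [exact: ltry | exact: near_z].
have h'_gt (y : V) : (forall i, `|y ord0 i - u ord0 i| <= r) -> (m%:E < h' y)%E.
  move=> _; rewrite /h'; case: ifPn => [_|ys]; first exact: ltry.
  apply: h_gt; apply: contraNneq ys => ->; by rewrite subrr enorm0.
have [c mc c_le] := lsc_gt_compact (box_compact u r) h'_lsc h'_gt.
exists c => // y sy yr.
have Ky : forall i, `|y ord0 i - u ord0 i| <= r.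
  move=> i; have := coord_le_enorm (y - u) i; rewrite !mxE => le.
  exact: le_trans le yr.
by have := c_le y Ky; rewrite /h' ltNge sy.
Qed.

Lemma lsc_addr {h : V -> \bar R} {q : V -> R} : lsc h ->
  (forall y e, 0 < e -> exists2 d, 0 < d &
     forall y', enorm (y' - y) < d -> `|q y' - q y| < e) ->
  lsc (fun y => h y + (q y)%:E)%E.
Proof.
move=> h_lsc q_cont z a a_lt.
have [b [b_lt ab]] : exists b : R, (b%:E < h z)%E /\ a < b + q z.
  move: a_lt; case: (h z) => [r| |] /=.
  - by rewrite lte_fin => a_lt; exists ((r + a - q z) / 2); rewrite lte_fin; split; lra.
  - by move=> _; exists (a - q z + 1); split; [exact: ltry | lra].
  - by rewrite ltNge leNye.
have [d1 d10 near1] := h_lsc z b b_lt.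
have gap0 : 0 < b + q z - a by lra.
have [d2 d20 near2] := q_cont z _ gap0.
exists (Num.min d1 d2); first by rewrite lt_min d10 d20.
move=> y; rewrite lt_min => /andP [y1 y2].
move: (near1 y y1); have := near2 y y2; rewrite ltr_norml => /andP [qa qb].
case: (h y) => [r| |] //=; last by move=> _; exact: ltry.
by rewrite !lte_fin => br; lra.
Qed.

Lemma continuous_scaled_sqr_dist (k : R) (z : V) : 0 < k ->
  forall y e, 0 < e -> exists2 d, 0 < d & forall y', enorm (y' - y) < d ->
    `|k * enorm (y' - z) ^+ 2 - k * enorm (y - z) ^+ 2| < e.
Proof.
move=> k0 y e e0; set A := y - z.
have A0 := enorm_ge0 A.
have c0 : 0 < k * (1 + 2 * enorm A) by rewrite mulr_gt0 //; lra.
exists (Num.min 1 (e / (k * (1 + 2 * enorm A)))).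
  by rewrite lt_min ltr01 divr_gt0.
move=> y'; rewrite lt_min => /andP [d1 d2]; set D := y' - y.
have -> : k * enorm (y' - z) ^+ 2 - k * enorm (y - z) ^+ 2 =
    k * (dotp D D + 2 * dotp D A).
  have -> : y' - z = D + A by rewrite /D /A addrA subrK.
  by rewrite !enorm_sqr dotp_sqrD; ring.
rewrite normrM (gtr0_norm k0).
have D0 := enorm_ge0 D.
have le_DA : `|dotp D D + 2 * dotp D A| <= enorm D * (1 + 2 * enorm A).
  apply: le_trans (ler_normD _ _) _.
  rewrite -enorm_sqr ger0_norm ?sqr_ge0 // normrM ger0_norm //.
  by have := normr_dotp_le D A; move: d1; rewrite -/D; nra.
have lt_e : enorm D * (1 + 2 * enorm A) < e / k.
  move: d2; rewrite -/D ltr_pdivlMr // => d2.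
  by rewrite ltr_pdivlMr // mulrAC -mulrA.
by rewrite mulrC -ltr_pdivlMr //; exact: le_lt_trans le_DA lt_e.
Qed.

End Semicontinuity.

Section AffineSup.
Context {R : realType}.
Implicit Types (Q : set (R * R)) (q : R * R).

Definition affine_sup Q (t : R) : \bar R :=
  ereal_sup [set (q.1 * (t - q.2))%:E | q in Q].

Lemma affine_sup_ub {Q q} t : Q q -> ((q.1 * (t - q.2))%:E <= affine_sup Q t)%E.
Proof. by move=> Qq; apply: ereal_sup_ubound; exists q. Qed.

Lemma affine_sup_convex Q : (forall q, Q q -> 0 <= q.1) ->
  forall s t a : R, 0 <= a -> a <= 1 ->
  (affine_sup Q (a * s + (1 - a) * t) <=
    a%:E * affine_sup Q s + (1 - a)%:E * affine_sup Q t)%E.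
Proof.
move=> Q_ge0 s t a a0 a1; apply/ereal_supP => _ [q Qq <-].
have -> : q.1 * (a * s + (1 - a) * t - q.2) =
    a * (q.1 * (s - q.2)) + (1 - a) * (q.1 * (t - q.2)) by ring.
rewrite EFinD !EFinM; apply: leeD; apply: lee_wpmul2l;
  by rewrite ?lee_fin ?subr_ge0 //; exact: affine_sup_ub.
Qed.

Lemma affine_sup_lsc {Q t} {b : R} : (forall q, Q q -> 0 <= q.1) ->
  (b%:E < affine_sup Q t)%E ->
  exists2 d : R, 0 < d & forall s, `|s - t| < d -> (b%:E < affine_sup Q s)%E.
Proof.
move=> Q_ge0 /ereal_sup_gt [_ [q Qq <-]]; rewrite lte_fin => bq.
have q1 := Q_ge0 q Qq; have q1p : 0 < q.1 + 1 by lra.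
exists ((q.1 * (t - q.2) - b) / (q.1 + 1)); first by rewrite divr_gt0 // subr_gt0.
move=> s st; apply: lt_le_trans (affine_sup_ub s Qq); rewrite lte_fin.
have q1_st : q.1 * `|s - t| <= q.1 * ((q.1 * (t - q.2) - b) / (q.1 + 1)).
  by rewrite ler_wpM2l // ltW.
have q1_d : q.1 * ((q.1 * (t - q.2) - b) / (q.1 + 1)) < q.1 * (t - q.2) - b.
  by rewrite mulrA ltr_pdivrMr //; nra.
have : - (q.1 * `|s - t|) <= q.1 * (s - t).
  by rewrite -mulrN ler_wpM2l // lerNnormlW.
have -> : q.1 * (s - q.2) = q.1 * (t - q.2) + q.1 * (s - t) by ring.
lra.
Qed.

Lemma Gamma0_affine_sup Q : Q (0, 0) -> (forall q, Q q -> 0 <= q.1 /\ 0 <= q.2) ->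
  (forall t, 0 < t -> exists2 q, Q q & 0 < q.1 * (t - q.2)) ->
  Gamma0 (affine_sup Q).
Proof.
move=> Q00 Q_ge0 Q_pos.
have Q1_ge0 q : Q q -> 0 <= q.1 by case/Q_ge0.
have sup_ge0 t : (0 <= affine_sup Q t)%E.
  by have := affine_sup_ub t Q00; rewrite /= mul0r.
split => [t _ //| t t0 | s t a _ _ | t b _ b_lt].
- split => [sup0|->].
    apply: contrapT => /eqP t_neq0; have t_gt0 : 0 < t by rewrite lt_def t_neq0.
    have [q Qq q_pos] := Q_pos t t_gt0.
    by have := affine_sup_ub t Qq; rewrite sup0 lee_fin leNgt q_pos.
  apply/le_anti; rewrite sup_ge0 andbT; apply/ereal_supP => _ [q Qq <-].
  by have [q1 q2] := Q_ge0 q Qq; rewrite lee_fin sub0r mulrN oppr_le0 mulr_ge0.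
- exact: affine_sup_convex.
- have [d d0 near_t] := affine_sup_lsc Q1_ge0 b_lt.
  by exists d => // s _; exact: near_t.
Qed.

End AffineSup.

Section Differentiability.
Context {R : realType} {n : nat}.
Local Notation V := 'rV[R]_n.

Lemma strictly_differentiable_differentiable (h : V -> \bar R) (x : V) :
  strictly_differentiable_at h x -> differentiable_at h x.
Proof.
move=> [v [h_fin h_strict]]; exists v; split => // eps eps0.
have [d d0 near_x] := h_strict eps eps0.
by exists d => // y yx; apply: near_x; rewrite ?subrr ?enorm0.
Qed.

Lemma strictly_differentiable_jsq (x : V) :
  strictly_differentiable_at (fun y => (jsq y)%:E) x.
Proof.
exists x; split; first by exists 1.
move=> eps eps0; exists eps => // y z yx zx /=.
rewrite jsqBB; apply: le_trans (normr_dotp_le _ _) _.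
rewrite [X in X <= _]mulrC; apply: ler_wpM2r; first exact: enorm_ge0.
rewrite enormZ ger0_norm ?invr_ge0 //.
by have := enormD_le (y - x) (z - x); lra.
Qed.

Lemma strictly_differentiable_lincomb (a b : V -> R) (c : R) (x : V) :
  strictly_differentiable_at (fun y => (a y)%:E) x ->
  strictly_differentiable_at (fun y => (b y)%:E) x ->
  strictly_differentiable_at (fun y => (a y + c * b y)%:E) x.
Proof.
move=> [va [_ a_strict]] [vb [_ b_strict]].
exists (va + c *: vb); split; first by exists 1.
move=> eps eps0; set k := eps / (2 * (`|c| + 1)).
have c1 : 0 < `|c| + 1 by rewrite ltr_wpDl.
have k0 : 0 < k by rewrite divr_gt0 // mulr_gt0.
have ck : `|c| * k <= eps / 2.
  have <- : (`|c| + 1) * k = eps / 2 by rewrite /k; field; rewrite gt_eqF.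
  by rewrite ler_pM2r // lerDl.
have [da da0 near_a] := a_strict (eps / 2) (divr_gt0 eps0 (ltr0Sn _ 1)).
have [db db0 near_b] := b_strict k k0.
exists (Num.min da db); first by rewrite lt_min da0 db0.
move=> y z; rewrite !lt_min => /andP [ya yb] /andP [za zb] /=.
have {}near_a := near_a y z ya za; have {}near_b := near_b y z yb zb.
rewrite /= in near_a near_b.
have -> : a y + c * b y - (a z + c * b z) - dotp (va + c *: vb) (y - z) =
    (a y - a z - dotp va (y - z)) + c * (b y - b z - dotp vb (y - z)).
  by rewrite dotpDl dotpZl; ring.
apply: le_trans (ler_normD _ _) _; rewrite normrM.
have := ler_wpM2l (normr_ge0 c) near_b; have := enorm_ge0 (y - z).
nra.
Qed.

Lemma subgradient_eq_gradient (h : V -> \bar R) (x v p : V) :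
  is_gradient h x v -> (forall z, dotp p (z - x) <= fine (h z) - fine (h x)) ->
  p = v.
Proof.
move=> [_ h_grad] p_sub; apply/eqP; rewrite -subr_eq0; apply/eqP.
set q := p - v; apply: dotpp_eq0.
have [q0|q_neq0] := eqVneq (enorm q) 0; first by rewrite -enorm_sqr q0 expr0n.
have q_gt0 : 0 < enorm q by rewrite lt_def q_neq0 enorm_ge0.
have [d d0 near_x] := h_grad (enorm q / 2) (divr_gt0 q_gt0 (ltr0Sn _ 1)).
set t := d / (2 * enorm q).
have t0 : 0 < t by rewrite divr_gt0 // mulr_gt0.
have zx : x + t *: q - x = t *: q by rewrite addrC addKr.
have dt : d / 2 = t * enorm q by rewrite /t; field; rewrite gt_eqF.
have tq : enorm (x + t *: q - x) = t * enorm q by rewrite zx enormZ gtr0_norm.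
have lt_d : enorm (x + t *: q - x) < d by rewrite tq -dt; lra.
have grad := ler_normlW (near_x _ lt_d).
have sub := p_sub (x + t *: q); rewrite tq zx in grad sub.
have : dotp p (t *: q) - dotp v (t *: q) = t * enorm q ^+ 2.
  by rewrite -dotpBl -/q dotpZr enorm_sqr.
have : 0 < t * enorm q ^+ 2 by rewrite mulr_gt0 // exprn_gt0.
lra.
Qed.

End Differentiability.

Lemma lt_prox_threshold_lower_bound {R : realType} {n : nat}
  (f : 'rV[R]_n -> \bar R) (lam : R) :
  (lam%:E < prox_threshold f)%E ->
  exists (lam' : R) (w : 'rV[R]_n) (C : R), lam < lam' /\
    forall y, (C%:E <= f y + ((2 * lam')^-1 * enorm (y - w) ^+ 2)%:E)%E.
Proof.
move=> /ereal_sup_gt [_ [lam' [_ [w env_gt]] <-]]; rewrite lte_fin => lt_lam'.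
have [C C_le] : exists C : R, (C%:E <= moreau_env f lam' w)%E.
  move: env_gt; case: (moreau_env f lam' w) => [r _| _|//]; first by exists r.
  by exists 0; rewrite leey.
exists lam', w, C; split => // y.
by apply: le_trans C_le _; apply: ereal_inf_lbound; exists y.
Qed.

Section ProximalMapping.
Context {R : realType} {n : nat}.
Local Notation V := 'rV[R]_n.
Context {f : V -> \bar R} {y0 : V} {lam lam' C : R} {w : V}.
Hypotheses (f_nmi : never_minfty f) (f_lsc : lsc f) (f_y0 : (f y0 < +oo)%E).
Hypotheses (lam_gt0 : 0 < lam) (lam_lt : lam < lam').
Hypothesis f_env_ge :
  forall y, (C%:E <= f y + ((2 * lam')^-1 * enorm (y - w) ^+ 2)%:E)%E.

Local Notation g := (scaled_plus_j f lam).

Let kappa := (2 * lam)^-1.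
Let fr y := fine (f y).
Let obj (z y : V) := (f y + (kappa * enorm (y - z) ^+ 2)%:E)%E.
Let objr (z y : V) := fr y + kappa * enorm (y - z) ^+ 2.

Let kappa_gt0 : 0 < kappa.
Proof. by rewrite invr_gt0 mulr_gt0. Qed.

Let lam_kappa : lam * kappa = 2^-1.
Proof. by rewrite /kappa invfM mulrCA mulfV ?gt_eqF // mulr1. Qed.

Let f_fin y : (f y < +oo)%E -> f y = (fr y)%:E.
Proof. by move=> fy; rewrite /fr fineK // fin_numE f_nmi -ltey fy. Qed.

Let f_infty y : ~ (f y < +oo)%E -> f y = +oo%E.
Proof. by move=> fy; apply/eqP; rewrite eq_le leey /= leNgt; apply/negP. Qed.

Let objE z y : (f y < +oo)%E -> obj z y = (objr z y)%:E.
Proof. by move=> fy; rewrite /obj f_fin. Qed.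

Let obj_infty z y : ~ (f y < +oo)%E -> obj z y = +oo%E.
Proof. by move=> fy; rewrite /obj f_infty. Qed.

Let g_fin y : (f y < +oo)%E -> g y = (lam * fr y + jsq y)%:E.
Proof. by move=> fy; rewrite /scaled_plus_j f_fin. Qed.

Let g_infty y : ~ (f y < +oo)%E -> g y = +oo%E.
Proof. by move=> fy; rewrite /scaled_plus_j f_infty // gt0_muley ?lte_fin. Qed.

Let lsc_obj z : lsc (obj z).
Proof. exact: lsc_addr f_lsc (continuous_scaled_sqr_dist kappa z kappa_gt0). Qed.

(* Since (2 lam')^-1 < kappa, the lower bound [f_env_ge] leaves a positive
   multiple of |y - c|^2 once the cross terms are absorbed by Young's
   inequality. *)
Lemma objr_coercive (z c : V) : exists2 a, 0 < a & exists b, forall y,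
  (f y < +oo)%E -> a * enorm (y - c) ^+ 2 - b <= objr z y.
Proof.
set k' := (2 * lam')^-1.
have lam'_gt0 : 0 < lam' by exact: lt_trans lam_gt0 lam_lt.
have k'_gt0 : 0 < k' by rewrite invr_gt0 mulr_gt0.
have k'_lt : k' < kappa.
  rewrite -subr_gt0.
  have -> : kappa - k' = (lam' - lam) / (2 * lam * lam').
    by rewrite /kappa /k'; field; rewrite !gt_eqF.
  by rewrite divr_gt0 ?mulr_gt0 // subr_gt0.
set W := c - w; set D := c - z.
have e0 : 0 < (kappa - k') / 4 by rewrite divr_gt0 // subr_gt0.
exists ((kappa - k') / 2); first by rewrite divr_gt0 // subr_gt0.
exists (- C + k' * dotp W W - kappa * dotp D D
  + k' ^+ 2 / ((kappa - k') / 4) * dotp W W + kappa ^+ 2 / ((kappa - k') / 4) * dotp D D).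
move=> y fy; have := f_env_ge y; rewrite f_fin // -EFinD lee_fin -/k'.
have -> : y - w = (y - c) + W by rewrite /W addrA subrK.
rewrite /objr; have -> : y - z = (y - c) + D by rewrite /D addrA subrK.
have Y1 := dotp_young (y - c) W _ k' e0.
have Y2 := dotp_young (y - c) D _ (- kappa) e0.
rewrite sqrrN in Y2.
move: Y1 Y2; rewrite !enorm_sqr !dotp_sqrD.
have := dotpp_ge0 (y - c).
move: (dotp (y - c) (y - c)) (dotp (y - c) W) (dotp (y - c) D) => YY YW YD.
set q1 := k' ^+ 2 / _; set q2 := kappa ^+ 2 / _.
lra.
Qed.

Lemma prox_nonempty z : exists p, prox_map f lam z p.
Proof.
have [a a0 [b coercive]] := objr_coercive z z.
set S := (objr z y0 + b) / a.
have sublevel_box y : (f y < +oo)%E -> objr z y <= objr z y0 ->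
    forall i, `|y ord0 i - z ord0 i| <= 1 + S.
  move=> fy le_y0 i; have := coord_le_enorm (y - z) i; rewrite !mxE => le_i.
  apply: le_trans le_i _.
  have : enorm (y - z) ^+ 2 <= S.
    by rewrite /S ler_pdivlMr //; have := coercive y fy; lra.
  by have := sqr_ge0 (enorm (y - z) - 1); nra.
have obj_ge (y : V) : (forall i, `|y ord0 i - z ord0 i| <= 1 + S) ->
    ((- b)%:E <= obj z y)%E.
  move=> _; have [fy|fy] := pselect (f y < +oo)%E; last by rewrite obj_infty ?leey.
  rewrite objE // lee_fin; have := coercive y fy.
  by have := sqr_ge0 (enorm (y - z)); nra.
have obj_y0 : (obj z y0 < +oo)%E by rewrite objE ?ltry.
have [p _ p_min] := lsc_compact_argmin (box_compact z (1 + S)) (lsc_obj z)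
  (sublevel_box y0 f_y0 (lexx _)) obj_y0 obj_ge.
exists p => y; change (obj z p <= obj z y)%E.
have [fy|fy] := pselect (f y < +oo)%E; last by rewrite (obj_infty z y fy) leey.
have [y_le|y_gt] := leP (objr z y) (objr z y0); first exact/p_min/sublevel_box.
apply: le_trans (p_min y0 (sublevel_box y0 f_y0 (lexx _))) _.
by rewrite !objE // lee_fin ltW.
Qed.

Lemma prox_dom {z p} : prox_map f lam z p -> (f p < +oo)%E.
Proof.
move=> Pp; apply: contrapT => fp; have : (obj z p <= obj z y0)%E by exact: Pp.
by rewrite obj_infty // objE // leye_eq.
Qed.

Lemma prox_objr_le {z p y} : prox_map f lam z p -> (f y < +oo)%E -> objr z p <= objr z y.
Proof.
move=> Pp fy; have : (obj z p <= obj z y)%E by exact: Pp.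
by rewrite !objE // (prox_dom Pp).
Qed.

Definition prox_pt z : V := projT1 (cid (prox_nonempty z)).

Lemma prox_ptP z : prox_map f lam z (prox_pt z).
Proof. exact: projT2 (cid (prox_nonempty z)). Qed.

Let envr z := objr z (prox_pt z).

Lemma moreau_envE z : moreau_env f lam z = (envr z)%:E.
Proof.
have Pz := prox_ptP z; apply/le_anti/andP; split.
  by apply: ereal_inf_lbound; exists (prox_pt z) => //; rewrite -objE // (prox_dom Pz).
by apply/ereal_infP => _ [y _ <-]; rewrite -objE ?(prox_dom Pz) //; exact: Pz.
Qed.

Lemma prox_envr {x p} : prox_map f lam x p -> envr x = objr x p.
Proof.
move=> Px; have Pz := prox_ptP x; apply/le_anti.
by rewrite /envr (prox_objr_le Pz (prox_dom Px)) (prox_objr_le Px (prox_dom Pz)).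
Qed.

Lemma conj_termE z y : dotp y z - lam * fr y - jsq y = jsq z - lam * objr z y.
Proof. by rewrite /objr mulrDr mulrA lam_kappa; have := dotpB_jsq y z; lra. Qed.

Lemma conjE z : conj g z = (jsq z - lam * envr z)%:E.
Proof.
have Pz := prox_ptP z; apply/le_anti/andP; split.
  apply/ereal_supP => _ [y _ <-].
  have [fy|fy] := pselect (f y < +oo)%E; last by rewrite g_infty //= leNye.
  rewrite g_fin // -EFinB lee_fin.
  have := ler_wpM2l (ltW lam_gt0) (prox_objr_le Pz fy).
  by have := conj_termE z y; rewrite /envr; lra.
apply: ereal_sup_ubound; exists (prox_pt z) => //.
by rewrite g_fin ?(prox_dom Pz) // -EFinB opprD addrA conj_termE.
Qed.

(* The conjugate of [g] dominates the affine minorant [z |-> <p, z> - g p],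
   which touches it at [x] when [p] is a proximal point of [x]. *)
Lemma prox_subgradient {x p} : prox_map f lam x p ->
  forall z, dotp p (z - x) <= fine (conj g z) - fine (conj g x).
Proof.
move=> Px z; have fp := prox_dom Px.
have : ((dotp p z - lam * fr p - jsq p)%:E <= conj g z)%E.
  by apply: ereal_sup_ubound; exists p => //; rewrite g_fin // -EFinB opprD addrA.
rewrite !conjE /= lee_fin (prox_envr Px) dotpBr.
by have := conj_termE x p; lra.
Qed.

Lemma prox_gradient_conj x v : is_gradient (conj g) x v ->
  prox_map f lam x = [set v].
Proof.
move=> grad_v.
have eq_v p : prox_map f lam x p -> p = v.
  by move=> Px; exact: subgradient_eq_gradient grad_v (prox_subgradient Px).
apply/seteqP; split => [p /eq_v -> //| _ ->] /=.
by rewrite -(eq_v _ (prox_ptP x)); exact: prox_ptP.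
Qed.

Lemma strictly_differentiable_conj x :
  strictly_differentiable_at (moreau_env f lam) x ->
  strictly_differentiable_at (conj g) x.
Proof.
have -> : moreau_env f lam = fun z => (envr z)%:E.
  by apply/funext => z; exact: moreau_envE.
have -> : conj g = fun z => (jsq z + (- lam) * envr z)%:E.
  by apply/funext => z; rewrite conjE mulNr.
exact: strictly_differentiable_lincomb (strictly_differentiable_jsq x).
Qed.

Lemma scaled_plus_j_gap x u y :
  lam * fr y + jsq y - (lam * fr u + jsq u) - dotp (y - u) x =
  lam * (objr x y - objr x u).
Proof.
have -> : lam * (objr x y - objr x u) = lam * fr y - lam * fr u +
    lam * kappa * (enorm (y - x) ^+ 2 - enorm (u - x) ^+ 2) by rewrite /objr; ring.
by rewrite lam_kappa -jsqB_dotp; ring.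
Qed.

Lemma envr_sub_le y z :
  envr y - envr z <= kappa * (enorm (prox_pt z - y) ^+ 2 - enorm (prox_pt z - z) ^+ 2).
Proof.
by have := prox_objr_le (prox_ptP y) (prox_dom (prox_ptP z)); rewrite /envr /objr; lra.
Qed.

Lemma envr_sub_dotp_le x u y z r :
  enorm (y - x) <= r -> enorm (z - x) <= r -> enorm (prox_pt z - u) <= r ->
  envr y - envr z - dotp ((2 * kappa) *: (x - u)) (y - z) <=
  kappa * (4 * r) * enorm (y - z).
Proof.
move=> yx zx pu; set p := prox_pt z; set W := (y - x) + (z - x) + 2 *: (u - p).
have E : kappa * (enorm (p - y) ^+ 2 - enorm (p - z) ^+ 2) -
    dotp ((2 * kappa) *: (x - u)) (y - z) = kappa * dotp (y - z) W.
  by rewrite /W !enorm_sqr; dotp_ring.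
have W_le : enorm W <= 4 * r.
  apply: le_trans (enormD_le _ _) _; rewrite enormZ ger0_norm // (enorm_distC u p).
  by have := enormD_le (y - x) (z - x); lra.
have : kappa * dotp (y - z) W <= kappa * (4 * r) * enorm (y - z).
  rewrite -mulrA; apply: ler_wpM2l; first exact: ltW.
  apply: le_trans (dotp_le _ _) _; rewrite [X in _ <= X]mulrC.
  by apply: ler_wpM2l; [exact: enorm_ge0 | exact: W_le].
by have := envr_sub_le y z; rewrite -/p; lra.
Qed.

Section UniqueProximalPoint.
Variables (x u : V).
Hypothesis prox_x : prox_map f lam x = [set u].

Let Pu : prox_map f lam x u. Proof. by rewrite prox_x. Qed.
Let fu : (f u < +oo)%E. Proof. exact: prox_dom Pu. Qed.

Lemma objr_gap_far : exists2 T, 0 < T & forall y, (f y < +oo)%E ->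
  T < enorm (y - u) -> enorm (y - u) <= objr x y - objr x u.
Proof.
have [a a0 [b coercive]] := objr_coercive x u.
set B := `|b + objr x u|; have B0 : 0 <= B := normr_ge0 _.
have T0 : 0 < (1 + B) / a by rewrite divr_gt0 //; lra.
exists (1 + (1 + B) / a); first lra.
move=> y fy; set t := enorm (y - u) => tT.
have at_gt : 1 + B < a * t by rewrite mulrC -ltr_pdivrMr //; lra.
have := coercive y fy; have := ler_norm (b + objr x u); rewrite -/B -/t.
have t1 : 1 <= t by lra.
nra.
Qed.

Lemma objr_gap_annulus s r : 0 < s -> exists2 mu, 0 < mu & forall y,
  (f y < +oo)%E -> s <= enorm (y - u) -> enorm (y - u) <= r ->
  mu <= objr x y - objr x u.
Proof.
move=> s0.
have u_lt y : y != u -> ((objr x u)%:E < obj x y)%E.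
  move=> yu; have [z lt_z] : exists z, (obj x z < obj x y)%E.
    apply: contrapT => none; move/eqP: yu; apply.
    suff : prox_map f lam x y by rewrite prox_x.
    by move=> z; rewrite leNgt; apply/negP => lt; apply: none; exists z.
  have le_z : (obj x u <= obj x z)%E by exact: Pu.
  by rewrite -objE //; exact: le_lt_trans le_z lt_z.
have [c lt_c c_le] := lsc_strict_min_annulus (lsc_obj x) s0 u_lt r.
exists (c - objr x u); first by rewrite subr_gt0.
by move=> y fy sy yr; have := c_le y sy yr; rewrite objE // lee_fin; lra.
Qed.

Lemma objr_linear_growth s : 0 < s -> exists2 al, 0 < al & forall y,
  (f y < +oo)%E -> al * (enorm (y - u) - s) <= objr x y - objr x u.
Proof.
move=> s0; have [T T0 far] := objr_gap_far.
have [mu mu0 near] := objr_gap_annulus s T s0.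
set al := Num.min 1 (mu / T).
have al0 : 0 < al by rewrite lt_min ltr01 divr_gt0.
have al1 : al <= 1 by rewrite ge_min lexx.
have alT : al * T <= mu by rewrite -ler_pdivlMr // ge_min lexx orbT.
exists al => // y fy; set t := enorm (y - u).
have t0 : 0 <= t := enorm_ge0 _.
have gap0 : 0 <= objr x y - objr x u by rewrite subr_ge0 prox_objr_le.
have [ts|st] := ltP t s; first by nra.
have [tT|Tt] := leP t T; first by have := near y fy st tT; rewrite -/t; nra.
have : al * t <= t by rewrite ler_piMl.
by have := far y fy Tt; rewrite -/t; have := mulr_gt0 al0 s0; lra.
Qed.

Lemma prox_cont_at eps : 0 < eps -> exists2 d, 0 < d & forall z p,
  enorm (z - x) < d -> prox_map f lam z p -> enorm (p - u) <= eps.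
Proof.
move=> eps0.
have [al al0 grow] := objr_linear_growth (eps / 2) (divr_gt0 eps0 (ltr0Sn _ 1)).
exists (al / (4 * kappa)); first by rewrite divr_gt0 // mulr_gt0.
move=> z p zx Pp; have fp := prox_dom Pp.
have gap_le : objr x p - objr x u <= kappa * (2 * dotp (p - u) (z - x)).
  by have := prox_objr_le Pp fu; rewrite -four_point_identity /objr; lra.
have zx' : enorm (z - x) * (4 * kappa) < al by rewrite -ltr_pdivlMr // mulr_gt0.
have grow_p := grow p fp.
have D_le : kappa * (2 * dotp (p - u) (z - x)) <=
    kappa * (2 * (enorm (p - u) * enorm (z - x))).
  by rewrite ler_pM2l // ler_pM2l //; exact: dotp_le.
have tr_al := ler_wpM2l (enorm_ge0 (p - u)) (ltW zx').
move: (objr x p - objr x u) (dotp (p - u) (z - x)) (enorm (p - u)) (enorm (z - x))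
  gap_le grow_p D_le tr_al => gap D t r gap_le grow_p D_le tr_al.
have : al * (t - eps) <= 0 by lra.
by rewrite pmulr_rle0 // subr_le0.
Qed.

Lemma strictly_differentiable_moreau_env :
  strictly_differentiable_at (moreau_env f lam) x.
Proof.
exists ((2 * kappa) *: (x - u)); split; first by exists 1 => // y _; rewrite moreau_envE.
move=> eps eps0; set r := eps / (4 * kappa).
have r0 : 0 < r by rewrite divr_gt0 // mulr_gt0.
have kr : kappa * (4 * r) = eps by rewrite /r; field; rewrite gt_eqF.
have [d d0 near] := prox_cont_at r r0.
exists (Num.min d r); first by rewrite lt_min d0 r0.
move=> y z; rewrite !lt_min => /andP [yd yr] /andP [zd zr].
have up := envr_sub_dotp_le x u y z r (ltW yr) (ltW zr) (near z _ zd (prox_ptP z)).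
have lo := envr_sub_dotp_le x u z y r (ltW zr) (ltW yr) (near y _ yd (prox_ptP y)).
rewrite !moreau_envE /= ler_norml; rewrite kr (enorm_distC z y) in lo; rewrite kr in up.
by move: up lo; rewrite !dotpBr; lra.
Qed.

Lemma ess_strongly_convex_prox : ess_strongly_convex_at g u x.
Proof.
split; first by rewrite /in_dom g_fin // ltry.
pose Q (q : R * R) := [/\ 0 <= q.1, 0 <= q.2 & forall y, (f y < +oo)%E ->
  q.1 * (enorm (y - u) - q.2) <= lam * (objr x y - objr x u)].
exists (affine_sup Q); split.
  apply: Gamma0_affine_sup => [| q [] // | t t0].
    split => //= y fy; rewrite mul0r mulr_ge0 ?(ltW lam_gt0) // subr_ge0.
    exact: prox_objr_le.
  have [al al0 grow] := objr_linear_growth (t / 2) (divr_gt0 t0 (ltr0Sn _ 1)).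
  exists (lam * al, t / 2); last by rewrite /= !mulr_gt0 //; lra.
  split => /=; [by rewrite mulr_ge0 // ltW | by rewrite divr_ge0 // ltW |].
  by move=> y fy; rewrite -mulrA ler_pM2l //; exact: grow.
move=> y; have [fy|fy] := pselect (f y < +oo)%E; last by rewrite (g_infty y fy) leey.
have : (affine_sup Q (enorm (y - u)) <= (lam * (objr x y - objr x u))%:E)%E.
  by apply/ereal_supP => _ [q [_ _ Qq] <-]; rewrite lee_fin; exact: Qq.
rewrite -scaled_plus_j_gap !g_fin // => le_gap.
by apply: le_trans (leeD2l _ le_gap) _; rewrite -!EFinD lee_fin; lra.
Qed.

End UniqueProximalPoint.

Lemma ess_strongly_convex_prox_unique x u : prox_map f lam x u ->
  ess_strongly_convex_at g u x -> prox_map f lam x = [set u].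
Proof.
move=> Pu [_ [psi [[psi_ge0 psi_eq0 _ _] psi_le]]].
apply/seteqP; split => [p Pp|_ -> //] /=.
have fp := prox_dom Pp; have fu := prox_dom Pu.
have obj_eq : objr x p = objr x u.
  by apply/le_anti; rewrite (prox_objr_le Pp fu) (prox_objr_le Pu fp).
have := psi_le p; rewrite !g_fin //.
have -> : lam * fr p + jsq p = lam * fr u + jsq u + dotp (p - u) x.
  by have := scaled_plus_j_gap x u p; rewrite obj_eq subrr mulr0; lra.
rewrite -EFinD -[X in (_ <= X)%E]adde0 leeD2lE // => psi_le0.
have /(psi_eq0 _ (enorm_ge0 _)) /enorm_eq0 /subr0_eq // : psi (enorm (p - u)) = 0%E.
by apply/le_anti; rewrite psi_le0 psi_ge0 // enorm_ge0.
Qed.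

End ProximalMapping.

Theorem mainTheorem9 (R : realType) (n : nat) (f : 'rV[R]_n -> \bar R)
  (lam : R) (x : 'rV[R]_n) :
  proper_fun f -> lsc f -> prox_bounded f ->
  (0 < prox_threshold f)%E ->
  0 < lam -> (lam%:E < prox_threshold f)%E ->
  in_dom f x ->
  let g := scaled_plus_j f lam in
  [/\ ((exists u, prox_map f lam x = [set u]) <->
         strictly_differentiable_at (moreau_env f lam) x),
      (strictly_differentiable_at (moreau_env f lam) x <->
         differentiable_at (conj g) x),
      (differentiable_at (conj g) x <->
         strictly_differentiable_at (conj g) x),
      (strictly_differentiable_at (conj g) x <->
         exists2 u, prox_map f lam x u & ess_strongly_convex_at g u x) &
      (forall v, is_gradient (conj g) x v -> prox_map f lam x = [set v])].
Proof.
(* x need not lie in dom f, and prox-boundedness follows from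
   0 < lam < prox_threshold f. *)
move=> [f_nmi [y0 f_y0]] f_lsc _ _ lam_gt0.
move=> /lt_prox_threshold_lower_bound [lam' [w [C [lam_lt f_ge]]]] _ /=.
have single_SE : (exists u, prox_map f lam x = [set u]) ->
    strictly_differentiable_at (moreau_env f lam) x.
  move=> [u]; exact: strictly_differentiable_moreau_env
    f_nmi f_lsc f_y0 lam_gt0 lam_lt f_ge x u.
have SE_SG := strictly_differentiable_conj f_nmi f_lsc f_y0 lam_gt0 lam_lt f_ge x.
have SG_DG := @strictly_differentiable_differentiable R n
  (conj (scaled_plus_j f lam)) x.
have grad_single := prox_gradient_conj f_nmi f_lsc f_y0 lam_gt0 lam_lt f_ge x.
have DG_single : differentiable_at (conj (scaled_plus_j f lam)) x ->
    exists u, prox_map f lam x = [set u].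
  by move=> [v /grad_single]; exists v.
have single_ESC : (exists u, prox_map f lam x = [set u]) ->
    exists2 u, prox_map f lam x u & ess_strongly_convex_at (scaled_plus_j f lam) u x.
  move=> [u Pu]; exists u; first by rewrite Pu.
  exact: ess_strongly_convex_prox f_nmi f_lsc f_y0 lam_gt0 lam_lt f_ge x u Pu.
have ESC_single : (exists2 u, prox_map f lam x u &
    ess_strongly_convex_at (scaled_plus_j f lam) u x) ->
    exists u, prox_map f lam x = [set u].
  move=> [u Pu ESC]; exists u.
  exact: ess_strongly_convex_prox_unique f_nmi f_y0 lam_gt0 x u Pu ESC.
by split=> //; tauto.
Qed.
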